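(* Let $E$ and $F$ be Banach spaces and $M>0$. If $d_N(E,F)<M^2$, then there exist a constant $L\ge 0$ and a bijective coarse $(M,L)$-quasi isometry $T:E\to F$.
   Context: A subset $N$ of a metric space $E$ is an $(\varepsilon,\delta)$-net if every point of $E$ is at distance less than $\varepsilon$ from some point of $N$ and any two distinct points of $N$ are at distance at least $\delta$; a net is an $(\varepsilon,\delta)$-net for some $\varepsilon,\delta>0$. For a Lipschitz map $T$, $l(T)=\sup\{d(Tx,Ty)/d(x,y):x\ne y\}$. The net distance $d_N(E,F)$ is the infimum of $l(T)\,l(T^{-1})$ over all bijections $T:N_E\to N_F$ between nets $N_E\subset E$, $N_F\subset F$ with $T,T^{-1}$ Lipschitz. A map $T:E\to F$ is a coarse $(M,L)$-quasi isometry if $\frac{1}{M}\|x-y\|-L\le\|Tx-Ty\|\le M\|x-y\|+L$ for all $x,y\in E$ and $T(E)$ is $\xi$-dense in $F$ for some $\xi>0$ (every point of $F$ is within distance $\xi$ of $T(E)$). *)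

From HB Require Import structures.
From mathcomp Require Import all_boot all_order all_algebra.
From mathcomp Require Import all_classical all_reals all_analysis.
Set Implicit Arguments. Unset Strict Implicit. Unset Printing Implicit Defensive.
Import Order.TTheory GRing.Theory Num.Theory.
Import numFieldNormedType.Exports.
Local Open Scope classical_set_scope.
Local Open Scope ring_scope.

Definition is_net (R : realType) (E : normedModType R) (N : set E) : Prop :=
  exists (eps delta : R), [/\ 0 < eps, 0 < delta,
    (forall x : E, exists2 y, N y & `|x - y| < eps) &
    (forall y z : E, N y -> N z -> y <> z -> delta <= `|y - z|)].

(* l(T) for T restricted to N: sup of the ratios d(Tx,Ty)/d(x,y), x <> y in N
   (with 0 added so that the sup of an empty family is 0 rather than -oo) *)
Definition lipc (R : realType) (E F : normedModType R) (N : set E) (T : E -> F)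
  : \bar R :=
  ereal_sup ([set 0%E] `|`
    [set r : \bar R | exists x y, [/\ N x, N y, x <> y &
       r = (`|T x - T y| / `|x - y|)%:E]]).

(* net distance d_N(E,F) : infimum of l(T) l(T^-1) over bijections
   T : N_E -> N_F between nets, with T and T^-1 Lipschitz.
   T is represented by f (restricted to N_E), T^-1 by g (restricted to N_F). *)
Definition net_dist (R : realType) (E F : normedModType R) : \bar R :=
  ereal_inf [set r : \bar R | exists (NE : set E) (NF : set F)
      (f : E -> F) (g : F -> E),
    [/\ is_net NE /\ is_net NF,
        ((forall x, NE x -> NF (f x)) /\ (forall y, NF y -> NE (g y))),
        ((forall x, NE x -> g (f x) = x) /\ (forall y, NF y -> f (g y) = y)),
        ((lipc NE f < +oo)%E /\ (lipc NF g < +oo)%E) &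
        r = (lipc NE f * lipc NF g)%E]].

Definition coarse_qi (R : realType) (E F : normedModType R) (M L : R)
  (T : E -> F) : Prop :=
  (forall x y : E, `|x - y| / M - L <= `|T x - T y| <= M * `|x - y| + L) /\
  (exists xi : R, 0 < xi /\ forall y : F, exists x : E, `|y - T x| <= xi).

From HB Require Import structures.
From mathcomp Require Import all_boot all_order all_algebra.
From mathcomp Require Import all_classical all_reals all_analysis.
From mathcomp Require Import ring lra.
Import Order.TTheory GRing.Theory Num.Theory.
Import numFieldNormedType.Exports.
Local Open Scope classical_set_scope.
Local Open Scope ring_scope.

(* Rescaling the net of E makes both f and its inverse g M-Lipschitz, so that x |-> f (P x),
   with P x a net point near x, is a coarse (M, L)-quasi isometry; what is missing is
   bijectivity. Probe x at the net points P (2^k x): the jumps D_(k+1) x between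
   f (P (2^(k+1) x)) and f (P (2 P (2^k x))) are uniformly bounded, so for a small ratio r the
   code x = f (P x) + sum_(k >= 1) r^k D_k x converges and stays near f (P x). Distinct points
   differ at some probe; at the first one the digits differ by the separation of the net of F
   and the tail cannot compensate, so the code is injective. Coding F into E in the same way
   and gluing the two injections as in the Cantor-Bernstein theorem gives a bijection that is
   still at bounded distance from f o P. *)

Lemma ler_distD2 {R : numDomainType} {V : normedZmodType R} (x x' y' y : V) :
  `|x - y| <= `|x - x'| + `|x' - y'| + `|y' - y|.
Proof.
apply: le_trans (ler_distD x' _ _) _; rewrite -addrA lerD2l.
exact: ler_distD.
Qed.

Lemma pow2_mul_unbounded {R : realType} {z : R} (c : R) :
  0 < z -> exists k : nat, c < z * 2 ^+ k.
Proof.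
move=> z0; have [n cn] : exists n : nat, c / z < n%:R.
  have [c0|c0] := leP 0 (c / z); last by exists 0%N.
  by exists (Num.bound (c / z)); apply: archi_boundP.
exists n; rewrite -ltr_pdivrMl // mulrC (lt_le_trans cn) //.
by rewrite -natrX ler_nat ltnW // ltn_expl.
Qed.

Lemma cvg_series_geometric_bound (R : realType) (V : completeNormedModType R)
    (u : V ^nat) (r b : R) :
  0 <= r < 1 -> (forall k, `|u k| <= b * r ^+ k) -> cvgn (series u).
Proof.
move=> /andP[r0 r1] ub; apply: normed_cvg.
have b0 : 0 <= b by have := ub 0%N; rewrite expr0 mulr1; apply: le_trans.
apply: (@series_le_cvg R _ (geometric b r)) => //.
- by move=> n /=.
- by move=> n; rewrite /geometric /=; exact: mulr_ge0 (exprn_ge0 _ _).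
- by apply: is_cvg_geometric_series; rewrite ger0_norm.
Qed.

Lemma series_geometric_tail (R : realType) (V : completeNormedModType R)
    (u : V ^nat) (r b : R) m :
  0 <= r < 1 -> 0 <= b -> cvgn (series u) ->
  (forall k, (m <= k)%N -> `|u k| <= b * r ^+ k) ->
  `|limn (series u) - series u m| <= b * (r ^+ m / (1 - r)).
Proof.
move=> /andP[r0 r1] b0 cu ub.
have partial n : (m <= n)%N -> `|series u n - series u m| <= b * (r ^+ m / (1 - r)).
  move=> mn; rewrite sub_series_geq //.
  apply: le_trans (ler_norm_sum _ _ _) _.
  apply: (@le_trans _ _ (\sum_(m <= k < n) b * r ^+ k)).
    rewrite big_nat_cond [leRHS]big_nat_cond.
    by apply: ler_sum => k /andP[/andP[mk _] _]; exact: ub.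
  rewrite -mulr_sumr ler_wpM2l // -(subnKC mn) geometric_partial_tail.
  rewrite geometric_seriesE ?lt_eqF //= ler_pM2r ?invr_gt0 ?subr_gt0 //.
  by rewrite ler_piMr ?exprn_ge0 // lerBlDr lerDl exprn_ge0.
set c := b * _ in partial *.
have ball_closed : closed ((fun v : V => `|v - series u m|) @^-1` [set x : R | x <= c]).
  apply: preimage_closed; last exact: closed_le.
  move=> v _.
  apply: (@continuous_comp _ _ _ (fun v : V => v - series u m) (fun v : V => `|v|)).
    by apply: cvgB; [exact: cvg_id | exact: cvg_cst].
  exact: norm_continuous.
apply: (@closed_cvg nat V \oo _ (series u) _ ball_closed) cu.
by exists m.
Qed.

(* h is i on the union of the (j \o i)-iterates of the complement of range j,
   and the inverse of j elsewhere. *)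
Lemma Cantor_Bernstein_glue {A B : Type} {i : A -> B} {j : B -> A} :
  injective i -> injective j ->
  exists2 h : A -> B, bijective h & forall x, h x = i x \/ j (h x) = x.
Proof.
move=> i_inj j_inj.
pose C := fix C n := if n is n.+1 then (j \o i) @` C n else ~` range j.
pose inC x := exists n, C n x.
have hP x : exists y, (inC x /\ y = i x) \/ (~ inC x /\ j y = x).
  have [Cx|nCx] := pselect (inC x); first by exists (i x); left.
  have : ~ C 0%N x by move=> C0x; apply: nCx; exists 0%N.
  by rewrite /= /setC /= => /contrapT[y _ jy]; exists y; right.
have [h hP'] := choice hP.
have h_inj : injective h.
  move=> x x'.
  have [[Cx ->]|[nCx jx]] := hP' x; have [[Cx' ->]|[nCx' jx']] := hP' x' => //.
  - exact: i_inj.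
  - move=> e; exfalso; apply: nCx'; case: Cx => n Cnx; exists n.+1.
    by exists x => //=; rewrite e.
  - move=> e; exfalso; apply: nCx; case: Cx' => n Cnx'; exists n.+1.
    by exists x' => //=; rewrite -e.
  - by move=> e; rewrite -jx -jx' e.
have h_surj y : exists x, h x = y.
  have [[[|n] /=]|nCjy] := pselect (inC (j y)).
  - by move=> /(_ (ex_intro2 _ _ y I erefl)).
  - case=> x Cnx /= /j_inj <-; exists x.
    by have [[_ ->]//|[nCx _]] := hP' x; exfalso; apply: nCx; exists n.
  - exists (j y); have [[Cjy _]|[_ e]] := hP' (j y); first by exfalso.
    exact: j_inj.
have [h' hh'] := choice h_surj.
exists h; first by exists h' => x; [apply: h_inj; exact: hh' | exact: hh'].
by move=> x; have [[_ ->]|[_ ->]] := hP' x; [left | right].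
Qed.

Lemma lipc_finite {R : realType} {E F : normedModType R} {N : set E} {T : E -> F} :
  (lipc N T < +oo)%E -> exists l : R, [/\ 0 <= l, lipc N T = l%:E &
    forall x y, N x -> N y -> `|T x - T y| <= l * `|x - y|].
Proof.
move=> fin.
have l0 : (0 <= lipc N T)%E by apply: ereal_sup_ubound; left.
have ub x y : N x -> N y -> x <> y -> ((`|T x - T y| / `|x - y|)%:E <= lipc N T)%E.
  by move=> Nx Ny xy; apply: ereal_sup_ubound; right; exists x, y.
move: fin l0 ub; case: (lipc N T) => [l| |] // _ l0 ub.
exists l; split => // x y Nx Ny.
have [->|xy] := eqVneq x y; first by rewrite !subrr !normr0 mulr0.
have := ub x y Nx Ny (elimN eqP xy).
by rewrite lee_fin ler_pdivrMr // normr_gt0 subr_eq0.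
Qed.

Lemma balanced_scale {R : realFieldType} {a b M : R} :
  0 < M -> 0 <= a -> 0 <= b -> a * b < M ^+ 2 ->
  exists lam, [/\ 0 < lam, a / lam <= M & lam * b <= M].
Proof.
move=> M0 a0 b0 abM; have [->|b_neq0] := eqVneq b 0.
  have lam0 : 0 < a / M + 1 by rewrite ltr_wpDl // divr_ge0 // ltW.
  exists (a / M + 1); split; rewrite ?mulr0 ?(ltW M0) //.
  by rewrite ler_pdivrMr // mulrDr mulr1 mulrC divfK ?gt_eqF // lerDl (ltW M0).
have {b_neq0} b_gt0 : 0 < b by rewrite lt_def b_neq0.
exists (M / b); split; first by rewrite divr_gt0.
  by rewrite invf_div mulrA ler_pdivrMr // -expr2 (ltW abM).
by rewrite divfK ?gt_eqF.
Qed.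

Section Nets.
Context {R : realType} {E : normedModType R}.

Lemma net_retraction {N : set E} : is_net N ->
  exists (P : E -> E) (eps : R), (forall x, N (P x)) /\ (forall x, `|x - P x| < eps).
Proof.
case=> eps [delta [_ _ dense _]].
have : forall x, exists y, N y /\ `|x - y| < eps.
  by move=> x; have [y Ny xy] := dense x; exists y.
by case/choice => P PP; exists P, eps; split => x; case: (PP x).
Qed.

Lemma net_separated {N : set E} : is_net N ->
  exists2 delta : R, 0 < delta & forall y z, N y -> N z -> y <> z -> delta <= `|y - z|.
Proof. by case=> eps [delta [_ delta0 _ sep]]; exists delta. Qed.

Lemma is_net_scale (N : set E) (lam : R) :
  0 < lam -> is_net N -> is_net (fun x => N (lam^-1 *: x)).
Proof.
move=> lam0 [eps [delta [eps0 delta0 dense sep]]]; have lam_neq0 := lt0r_neq0 lam0.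
have scaleB (y z : E) : y - z = lam *: (lam^-1 *: y - lam^-1 *: z).
  by rewrite scalerBr !scalerKV.
exists (lam * eps), (lam * delta); split; rewrite ?mulr_gt0 //.
  move=> x; have [y Ny xy] := dense (lam^-1 *: x).
  exists (lam *: y); first by rewrite scalerK.
  by rewrite scaleB scalerK // normrZ gtr0_norm // ltr_pM2l.
move=> y z Ny Nz yz; rewrite scaleB normrZ gtr0_norm // ler_pM2l //.
by apply: sep => // /(can_inj (scalerKV lam_neq0)).
Qed.

End Nets.

Record net_equiv {R : realType} {E F : normedModType R} (NE : set E) (NF : set F)
    (f : E -> F) (g : F -> E) (a b : R) : Prop := {
  net_equiv_dom : is_net NE;
  net_equiv_cod : is_net NF;
  net_equiv_f : forall x, NE x -> NF (f x);
  net_equiv_g : forall y, NF y -> NE (g y);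
  net_equiv_gf : forall x, NE x -> g (f x) = x;
  net_equiv_fg : forall y, NF y -> f (g y) = y;
  net_equiv_lip_f : forall x x', NE x -> NE x' -> `|f x - f x'| <= a * `|x - x'|;
  net_equiv_lip_g : forall y y', NF y -> NF y' -> `|g y - g y'| <= b * `|y - y'| }.

Section NetEquivalence.
Context {R : realType} {E F : normedModType R}.
Implicit Types (NE : set E) (NF : set F) (f : E -> F) (g : F -> E).

Lemma net_equiv_le {NE NF f g} {a a' b b' : R} :
  a <= a' -> b <= b' -> net_equiv NE NF f g a b -> net_equiv NE NF f g a' b'.
Proof.
move=> aa' bb' [? ? ? ? ? ? flip glip]; split => // [x x' Nx Nx'|y y' Ny Ny'].
  by apply: le_trans (flip _ _ Nx Nx') _; rewrite ler_wpM2r.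
by apply: le_trans (glip _ _ Ny Ny') _; rewrite ler_wpM2r.
Qed.

Lemma net_equiv_scale {NE NF f g} {a b lam : R} : 0 < lam -> net_equiv NE NF f g a b ->
  net_equiv (fun x => NE (lam^-1 *: x)) NF (fun x => f (lam^-1 *: x))
    (fun y => lam *: g y) (a / lam) (lam * b).
Proof.
move=> lam0 [netE netF fNF gNE gf fg flip glip]; have lam_neq0 := lt0r_neq0 lam0.
split => //=.
- exact: is_net_scale.
- by move=> x /fNF.
- by move=> y /gNE; rewrite scalerK.
- by move=> x /gf ->; rewrite scalerKV.
- by move=> y /fg; rewrite scalerK.
- move=> x x' Nx Nx'; apply: le_trans (flip _ _ Nx Nx') _.
  by rewrite -scalerBr normrZ ger0_norm ?invr_ge0 ?(ltW lam0) // mulrA.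
- move=> y y' Ny Ny'; rewrite -scalerBr normrZ gtr0_norm // -mulrA ler_pM2l //.
  exact: glip.
Qed.

End NetEquivalence.

Section Encoding.
Context {R : realType} {E : normedModType R} {F : completeNormedModType R}.
Context {A : set E} {P : E -> E} {eps : R} {B : set F} {delta : R}.
Context {f : E -> F} {a : R}.
Hypotheses (PA : forall x, A (P x)) (P_near : forall x, `|x - P x| < eps).
Hypotheses (delta_gt0 : 0 < delta)
  (B_sep : forall y z, B y -> B z -> y <> z -> delta <= `|y - z|).
Hypotheses (fAB : forall x, A x -> B (f x))
  (f_inj : forall x y, A x -> A y -> f x = f y -> x = y).
Hypotheses (a_ge0 : 0 <= a)
  (f_lip : forall x y, A x -> A y -> `|f x - f y| <= a * `|x - y|).

Let eps_gt0 : 0 < eps. Proof. exact: le_lt_trans (P_near 0). Qed.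

Definition digit_bound := a * (4 * eps).

Let digit_bound_ge0 : 0 <= digit_bound. Proof. by rewrite !mulr_ge0 // ltW. Qed.

Definition probe k x := P (2 ^+ k *: x).

Definition digit x k :=
  if k is k'.+1 then f (probe k x) - f (P (2 *: probe k' x)) else f (probe 0 x).

Definition code_ratio := delta / (delta + 4 * digit_bound + 1).

Definition code_term x k := code_ratio ^+ k *: digit x k.

Definition code x := limn (series (code_term x)).

Lemma P_double y : `|P (2 *: y) - P (2 *: P y)| <= 4 * eps.
Proof.
have -> : P (2 *: y) - P (2 *: P y) =
    - (2 *: y - P (2 *: y)) + 2 *: (y - P y) + (2 *: P y - P (2 *: P y)).
  by rewrite scalerBr opprB !addrA !subrK.
have := ler_normD (- (2 *: y - P (2 *: y))) (2 *: (y - P y)).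
rewrite normrN normrZ ger0_norm // => le_first.
apply: le_trans (ler_normD _ _) _.
by have := P_near (2 *: y); have := P_near y; have := P_near (2 *: P y); lra.
Qed.

Lemma norm_digitS x k : `|digit x k.+1| <= digit_bound.
Proof.
rewrite /= /probe exprS -scalerA; apply: le_trans (f_lip _ _ (PA _) (PA _)) _.
by rewrite /digit_bound ler_wpM2l // P_double.
Qed.

Let code_ratio_den : delta < delta + 4 * digit_bound + 1.
Proof. by have := digit_bound_ge0; have := delta_gt0; lra. Qed.

Lemma code_ratio_gt0 : 0 < code_ratio.
Proof. by rewrite divr_gt0 // (lt_trans _ code_ratio_den). Qed.

Lemma code_ratio_lt1 : code_ratio < 1.
Proof. by rewrite ltr_pdivrMr ?mul1r // (lt_trans _ code_ratio_den). Qed.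

Let code_ratio_ge0 : 0 <= code_ratio. Proof. exact: ltW code_ratio_gt0. Qed.

Let code_ratio_itv : 0 <= code_ratio < 1.
Proof. by rewrite code_ratio_ge0 code_ratio_lt1. Qed.

(* The tail of the series beyond a digit is dominated by that digit's share of delta. *)
Lemma code_ratio_small : 2 * digit_bound * (code_ratio / (1 - code_ratio)) < delta.
Proof.
have := digit_bound_ge0; have := delta_gt0 => d0 j0.
have -> : code_ratio / (1 - code_ratio) = delta / (4 * digit_bound + 1).
  by rewrite /code_ratio; field; rewrite !gt_eqF //; lra.
rewrite mulrA ltr_pdivrMr; last lra.
by rewrite mulrC ltr_pM2l //; lra.
Qed.

Lemma norm_code_termS x k : `|code_term x k.+1| <= digit_bound * code_ratio ^+ k.+1.
Proof.
rewrite normrZ ger0_norm ?exprn_ge0 // mulrC.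
by rewrite ler_wpM2r ?exprn_ge0 // norm_digitS.
Qed.

Lemma code_cvg x : cvgn (series (code_term x)).
Proof.
apply: (@cvg_series_geometric_bound _ _ _ _ (`|digit x 0| + digit_bound) code_ratio_itv).
case=> [|k]; first by rewrite /code_term expr0 scale1r mulr1 lerDl.
apply: le_trans (norm_code_termS x k) _.
by rewrite ler_wpM2r ?exprn_ge0 // lerDr.
Qed.

Lemma code_tail x m : (0 < m)%N ->
  `|code x - series (code_term x) m| <= digit_bound * (code_ratio ^+ m / (1 - code_ratio)).
Proof.
move=> m0; apply: series_geometric_tail => //; first exact: code_cvg.
by case=> [|k] mk; [have := leq_trans m0 mk | exact: norm_code_termS].
Qed.

Lemma code_near x : `|code x - f (P x)| <= digit_bound * (code_ratio / (1 - code_ratio)).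
Proof.
have := code_tail x 1 isT.
by rewrite /series /= big_nat1 /code_term /digit /probe !expr0 !scale1r.
Qed.

Lemma probe_separates x y : x != y -> exists k, probe k x != probe k y.
Proof.
move=> xy; apply: contrapT => /forallNP same.
have {}same k : probe k x = probe k y by apply/eqP/negbNE/negP; exact: same.
have xy0 : 0 < `|x - y| by rewrite normr_gt0 subr_eq0.
have [k ltk] := pow2_mul_unbounded (2 * eps) xy0.
have : `|2 ^+ k *: (x - y)| < 2 * eps.
  have -> : 2 ^+ k *: (x - y) = (2 ^+ k *: x - probe k x) + (probe k y - 2 ^+ k *: y).
    by rewrite same scalerBr addrA subrK.
  apply: le_lt_trans (ler_normD _ _) _; rewrite [`|probe k y - _|]distrC.
  by have := P_near (2 ^+ k *: x); have := P_near (2 ^+ k *: y); lra.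
by rewrite normrZ ger0_norm ?exprn_ge0 // mulrC ltNge (ltW ltk).
Qed.

Lemma series_code_term_agree {x y : E} {k : nat} :
  (forall i, (i < k)%N -> probe i x = probe i y) ->
  series (code_term x) k = series (code_term y) k.
Proof.
move=> agree.
rewrite /series /= big_nat_cond [RHS]big_nat_cond.
apply: eq_bigr => -[|i] /andP[/andP[_ ik] _]; rewrite /code_term /digit.
  by rewrite agree.
by rewrite !agree // ltnW.
Qed.

Lemma digit_sep {x y : E} {k : nat} :
  (forall i, (i < k)%N -> probe i x = probe i y) ->
  probe k x != probe k y -> delta <= `|digit x k - digit y k|.
Proof.
move=> agree /eqP xy; have -> : digit x k - digit y k = f (probe k x) - f (probe k y).
  by case: k agree xy => //= i ag _; rewrite (ag i) // opprB addrA subrK.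
by apply: B_sep; [exact/fAB/PA | exact/fAB/PA | move/f_inj => /(_ (PA _) (PA _))].
Qed.

(* Let k be the first probe where x and y differ: the digits below k agree, the k-th
   differ by at least delta, and the tails cannot make up for this. *)
Lemma code_inj : injective code.
Proof.
move=> x y exy; apply/eqP; apply: contraT => xy.
have [k sep kmin] := ex_minnP (probe_separates _ _ xy).
have agree i : (i < k)%N -> probe i x = probe i y.
  by move=> ik; apply/eqP; apply: contraT => /kmin; rewrite leqNgt ik.
have terms : code_term x k - code_term y k =
    (code y - series (code_term y) k.+1) - (code x - series (code_term x) k.+1).
  rewrite exy !seriesSr (series_code_term_agree agree).
  by rewrite opprB [RHS]addrC addrA subrK [_ + code_term x k]addrC addrKA.
have : `|code_term x k - code_term y k|
    <= code_ratio ^+ k * (2 * digit_bound * (code_ratio / (1 - code_ratio))).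
  rewrite terms; apply: le_trans (ler_normB _ _) _.
  have -> : code_ratio ^+ k * (2 * digit_bound * (code_ratio / (1 - code_ratio))) =
      digit_bound * (code_ratio ^+ k.+1 / (1 - code_ratio)) *+ 2.
    by rewrite exprS mulr2n; field; rewrite gt_eqF // subr_gt0 code_ratio_lt1.
  by rewrite mulr2n lerD ?code_tail.
rewrite -scalerBr normrZ ger0_norm ?exprn_ge0 //.
rewrite ler_pM2l ?exprn_gt0 ?code_ratio_gt0 // => /(le_trans (digit_sep agree sep)).
by rewrite leNgt code_ratio_small.
Qed.

Lemma net_encoding :
  exists2 i : E -> F, injective i & exists C, forall x, `|i x - f (P x)| <= C.
Proof.
exists code; first exact: code_inj.
by exists (digit_bound * (code_ratio / (1 - code_ratio))); exact: code_near.
Qed.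

End Encoding.

Section CoarseEquivalence.
Context {R : realType} {E F : completeNormedModType R} {M : R}.
Context {NE : set E} {NF : set F} {f : E -> F} {g : F -> E}.
Hypotheses (M_gt0 : 0 < M) (equiv : net_equiv NE NF f g M M).
Context {PE : E -> E} {eE : R}.
Hypotheses (PE_net : forall x, NE (PE x)) (PE_near : forall x, `|x - PE x| < eE).

Let eE_ge0 : 0 <= eE. Proof. exact: ltW (le_lt_trans (normr_ge0 _) (PE_near 0)). Qed.

(* Either h x is the code i x, or x = j (h x): then h x is near the net point
   PF (h x), whose g-image is near j (h x) = x. *)
Lemma bijection_near_net_map :
  exists2 h : E -> F, bijective h & exists K, forall x, `|h x - f (PE x)| <= K.
Proof.
have [netE netF fNF gNE gf fg f_lip g_lip] := equiv.
have f_inj x x' : NE x -> NE x' -> f x = f x' -> x = x'.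
  by move=> Nx Nx' /(congr1 g); rewrite !gf.
have g_inj y y' : NF y -> NF y' -> g y = g y' -> y = y'.
  by move=> Ny Ny' /(congr1 f); rewrite !fg.
have [PF [eF [PF_net PF_near]]] := net_retraction netF.
have [dE dE0 sepE] := net_separated netE.
have [dF dF0 sepF] := net_separated netF.
have [i i_inj [Ci iCi]] :=
  net_encoding PE_net PE_near dF0 sepF fNF f_inj (ltW M_gt0) f_lip.
have [j j_inj [Cj jCj]] :=
  net_encoding PF_net PF_near dE0 sepE gNE g_inj (ltW M_gt0) g_lip.
have [h h_bij hij] := Cantor_Bernstein_glue i_inj j_inj.
exists h => //; exists (Ci + eF + M * (Cj + eE)) => x.
have Ci_ge0 : 0 <= Ci := le_trans (normr_ge0 _) (iCi 0).
have Cj_ge0 : 0 <= Cj := le_trans (normr_ge0 _) (jCj 0).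
have eF_ge0 : 0 <= eF := ltW (le_lt_trans (normr_ge0 _) (PF_near 0)).
case: (hij x) => [-> | jhx].
  apply: le_trans (iCi x) _.
  by rewrite -addrA lerDl addr_ge0 ?mulr_ge0 ?addr_ge0 ?(ltW M_gt0).
set y := h x in jhx *; rewrite -addrA; apply: ler_wpDl Ci_ge0 _.
apply: le_trans (ler_distD (PF y) _ _) _; apply: lerD (ltW (PF_near y)) _.
rewrite -[X in `|X - f _|](fg _ (PF_net y)).
apply: le_trans (f_lip _ _ (gNE _ (PF_net y)) (PE_net x)) _.
rewrite ler_wpM2l ?(ltW M_gt0) //; apply: le_trans (ler_distD x _ _) _.
apply: lerD _ (ltW (PE_near x)).
by rewrite -jhx distrC.
Qed.

Lemma coarse_qi_near_net_map {h : E -> F} {K : R} : bijective h ->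
  (forall x, `|h x - f (PE x)| <= K) -> exists L, 0 <= L /\ coarse_qi M L h.
Proof.
move=> [h' hK h'K] near; have [_ _ fNF _ gf _ f_lip g_lip] := equiv.
have M_ge0 := ltW M_gt0.
have K_ge0 : 0 <= K := le_trans (normr_ge0 _) (near 0).
exists (2 * K + 2 * eE * (M + M^-1)); split.
  by rewrite addr_ge0 ?mulr_ge0 ?addr_ge0 ?invr_ge0.
split=> [x y|]; last by exists 1; split=> // y; exists (h' y); rewrite h'K subrr normr0.
have f_PE : `|f (PE x) - f (PE y)| <= `|h x - h y| + 2 * K.
  have := ler_distD2 (f (PE x)) (h x) (h y) (f (PE y)).
  by rewrite [`|f _ - h x|]distrC; have := near x; have := near y; lra.
have P_xy : `|PE x - PE y| <= `|x - y| + 2 * eE.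
  have := ler_distD2 (PE x) x y (PE y).
  by rewrite [`|PE x - x|]distrC; have := PE_near x; have := PE_near y; lra.
apply/andP; split.
- have g_f := g_lip _ _ (fNF _ (PE_net x)) (fNF _ (PE_net y)).
  rewrite !gf // in g_f.
  have x_y : `|x - y| <= `|PE x - PE y| + 2 * eE.
    have := ler_distD2 x (PE x) (PE y) y.
    by rewrite [`|PE y - _|]distrC; have := PE_near x; have := PE_near y; lra.
  have := ler_wpM2l M_ge0 f_PE.
  have L_M : (`|h x - h y| + (2 * K + 2 * eE * (M + M^-1))) * M =
      M * `|h x - h y| + 2 * K * M + 2 * eE * (M * M) + 2 * eE.
    by field; rewrite lt0r_neq0.
  have : 0 <= eE * (M * M) by rewrite !mulr_ge0.
  by rewrite lerBlDr ler_pdivrMr // L_M; lra.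
- have := ler_wpM2l M_ge0 P_xy.
  have := f_lip _ _ (PE_net x) (PE_net y).
  have := ler_distD2 (h x) (f (PE x)) (f (PE y)) (h y).
  rewrite [`|f (PE y) - _|]distrC; have := near x; have := near y.
  have : 0 <= eE / M by rewrite divr_ge0.
  lra.
Qed.

End CoarseEquivalence.

Lemma net_equiv_coarse_qi {R : realType} {E F : completeNormedModType R} {M : R}
    {NE : set E} {NF : set F} {f : E -> F} {g : F -> E} :
  0 < M -> net_equiv NE NF f g M M ->
  exists L : R, 0 <= L /\ exists T : E -> F, bijective T /\ coarse_qi M L T.
Proof.
move=> M_gt0 equiv; have [netE _ _ _ _ _ _ _] := equiv.
have [PE [eE [PE_net PE_near]]] := net_retraction netE.
have [h h_bij [K hK]] := bijection_near_net_map M_gt0 equiv PE_net PE_near.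
have [L [L_ge0 hL]] := coarse_qi_near_net_map M_gt0 equiv PE_net PE_near h_bij hK.
by exists L; split => //; exists h.
Qed.

Theorem fact2 (R : realType) (E F : completeNormedModType R) (M : R) :
  0 < M -> (net_dist E F < (M ^+ 2)%:E)%E ->
  exists L : R, 0 <= L /\ exists T : E -> F, bijective T /\ coarse_qi M L T.
Proof.
move=> M_gt0 /ereal_inf_lt[_ [NE [NF [f [g [[netE netF] [fNF gNE] [gf fg] [f_fin g_fin] ->]]]]]].
have [a [a_ge0 -> f_lip]] := lipc_finite f_fin.
have [b [b_ge0 -> g_lip]] := lipc_finite g_fin.
rewrite -EFinM lte_fin => abM.
have [lam [lam_gt0 aM bM]] := balanced_scale M_gt0 a_ge0 b_ge0 abM.
have : net_equiv NE NF f g a b by split.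
move=> /(net_equiv_scale lam_gt0) /(net_equiv_le aM bM).
exact: net_equiv_coarse_qi.
Qed.
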